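(* Let $\mathsf{T}$ be a rooted plane tree and $\delta\in\mathcal{O}(\mathsf{T})$. For all $v\in\mathsf{T}$, we have $\mathsf{Pop}(\delta)(v)\subseteq\delta(v)$. Moreover, for each child $u$ of $v$ with $u\in\delta(v)$, we have $|\Delta_{\mathsf{Pop}(\delta)(v)}(u)|\leq|\Delta_{\delta(v)}(u)|-1$.
   Context: A rooted plane tree $\mathsf{T}$ is a finite tree with a distinguished root, regarded as a poset $\leq_\mathsf{T}$ in which $v'\leq_\mathsf{T} v$ iff $v$ lies on the path from $v'$ to the root; the children of $v$ are the nodes covered by $v$. An ornament is a nonempty set of nodes inducing a connected subgraph. For a set $S$ of nodes and a node $u$, $\Delta_S(u)=\{w\in S:w\leq_\mathsf{T} u\}$ (empty if no such $w$). An ornamentation is a map $\delta$ from $\mathsf{T}$ to ornaments such that the unique maximal element of $\delta(v)$ is $v$ and any two sets $\delta(v),\delta(v')$ are nested or disjoint. $\mathcal{O}(\mathsf{T})$ is the set of ornamentations ordered by $\delta\leq\delta'$ iff $\delta(v)\subseteq\delta'(v)$ for all $v$; it is a lattice with meet given by pointwise intersection. $\mathsf{Pop}(\delta)=\bigwedge(\{\delta\}\cup\{\delta':\delta'\lessdot\delta\})$, where $\lessdot$ is the cover relation. *)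

From mathcomp Require Import all_boot.
Set Implicit Arguments. Unset Strict Implicit. Unset Printing Implicit Defensive.

(* A rooted tree on a finite vertex type V is given by a root r and a parent
   map [par] (with par r = r); every vertex reaches the root by iterating par.
   The planar ordering of children plays no role in the statement. *)
Section Trees.
Variables (V : finType) (r : V) (par : V -> V).

Definition is_rooted_tree : bool :=
  (par r == r) && [forall v, fconnect par v r].

Definition tle (v' v : V) : bool := fconnect par v' v.

Definition is_child (u v : V) : bool := (par u == v) && (u != r).

Definition edge_in (S : {set V}) : rel V :=
  fun x y => [&& x \in S, y \in S & ((par x == y) && (x != r)) || ((par y == x) && (y != r))].

Definition ornament (S : {set V}) : bool :=
  (S != set0) && [forall x in S, forall y in S, connect (edge_in S) x y].

Definition Delta (S : {set V}) (u : V) : {set V} := [set w in S | tle w u].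

Definition ornamentation (d : {ffun V -> {set V}}) : bool :=
  [forall v, ornament (d v)]
  && [forall v, (v \in d v) && [forall w in d v, tle w v]]
  && [forall v, forall v', [|| d v \subset d v', d v' \subset d v
                              | [disjoint d v & d v']]].

Definition orn_le (d d' : {ffun V -> {set V}}) : bool :=
  [forall v, d v \subset d' v].

Definition orn_lt (d d' : {ffun V -> {set V}}) : bool :=
  (d != d') && orn_le d d'.

Definition orn_covered (d' d : {ffun V -> {set V}}) : bool :=
  [&& ornamentation d', ornamentation d, orn_lt d' d &
      ~~ [exists e, [&& ornamentation e, orn_lt d' e & orn_lt e d]]].

(* Pop(d): meet (pointwise intersection) of d and all its lower covers *)
Definition Pop (d : {ffun V -> {set V}}) : {ffun V -> {set V}} :=
  [ffun v => d v :&: \bigcap_(d' | orn_covered d' d) d' v].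

End Trees.

From mathcomp Require Import all_boot.

(* For a child u of v inside d(v), cutting the subtree below u off the block
   d(v) gives an ornamentation strictly below d; a lower cover of d above it
   agrees with d away from v and keeps d(v) minus that subtree, so it must
   drop some vertex of Delta_{d(v)}(u) from d(v), and Pop(d)(v) drops it too. *)

Section OrnamentationLattice.
Set Implicit Arguments. Unset Strict Implicit.
Variables (V : finType) (r : V) (par : V -> V).
Hypothesis tree : is_rooted_tree r par.

Lemma tle_refl x : tle par x x.
Proof. exact: connect0. Qed.

Lemma tle_trans y x z : tle par x y -> tle par y z -> tle par x z.
Proof. exact: connect_trans. Qed.

Lemma tle_par x : tle par x (par x).
Proof. exact: fconnect1. Qed.

Lemma par_root : par r = r.
Proof. by case/andP: tree => /eqP. Qed.

Lemma tle_to_root a : tle par a r.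
Proof. by case/andP: tree => _ /forallP/(_ a). Qed.

Lemma fixed_point_root a : par a = a -> a = r.
Proof. by move=> para; rewrite -(iter_findex (tle_to_root a)) iter_fix. Qed.

Lemma tle_root a : tle par r a -> a = r.
Proof. by move/iter_findex <-; rewrite iter_fix // par_root. Qed.

(* If [a <> b] then [a] lies on a cycle of [par] of length [m > 0]; going
   around it [k] times, [k] being the distance from [a] to the root, passes
   through the fixed point [r], hence [a = r]. *)
Lemma tle_anti a b : tle par a b -> tle par b a -> a = b.
Proof.
move=> ab ba; have iab := iter_findex ab; have iba := iter_findex ba.
have [i0 | ipos] := posnP (findex par a b); first by rewrite -iab i0.
set m := findex par b a + findex par a b.
have cycle_a : iter m par a = a by rewrite iterD iab iba.
have akr := iter_findex (tle_to_root a); set k := findex par a r in akr.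
have ar : a = r.
  have mpos : 0 < m by rewrite addn_gt0 ipos orbT.
  rewrite -(iter_fix k cycle_a) -iterM -(subnK (leq_pmulr k mpos)) iterD akr.
  by rewrite iter_fix // par_root.
by move: ab; rewrite ar => /tle_root ->.
Qed.

Lemma tle_comparable x a b :
  tle par x a -> tle par x b -> tle par a b || tle par b a.
Proof.
move=> /iter_findex xa /iter_findex xb; rewrite /tle -xa -xb.
case: (leqP (findex par x a) (findex par x b)) => [le | /ltnW le].
  by rewrite -(subnK le) iterD fconnect_iter.
by rewrite -(subnK le) iterD fconnect_iter orbT.
Qed.

Lemma tle_eqVpar a x : tle par a x = (a == x) || tle par (par a) x.
Proof.
apply/idP/orP => [ax | [/eqP <- | pax]]; last 2 first.
- exact: tle_refl.
- exact: tle_trans (tle_par a) pax.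
case: (eqVneq a x) => [| nax]; [by left | right].
move: (iter_findex ax) nax; case: (findex par a x) => [/= -> | n].
  by rewrite eqxx.
by rewrite iterSr => <- _; apply: fconnect_iter.
Qed.

Lemma child_not_ge u v : is_child r par u v -> ~~ tle par v u.
Proof.
case/andP=> /eqP puv ur; apply/negP => vu.
have uv : tle par u v by rewrite -puv tle_par.
move: puv; rewrite (tle_anti vu uv) => /fixed_point_root ur'.
by rewrite ur' eqxx in ur.
Qed.

Lemma edge_in_sym S : symmetric (edge_in r par S).
Proof. by move=> x y; rewrite /edge_in andbCA orbC. Qed.

(* Ornaments are convex: a path in [S] starting below [x] and ending elsewhere
   must leave the down-set of [x] through the edge from [x] to its parent. *)
Lemma path_exit_par S x a p :
  tle par a x -> path (edge_in r par S) a p -> ~~ tle par (last a p) x ->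
  par x \in S.
Proof.
elim: p a => [|b p IH] a ax /=; first by rewrite ax.
case/andP=> ab pth lst; case bx: (tle par b x); first exact: IH bx pth lst.
case/and3P: ab => _ bS /orP[/andP[/eqP pab _] | /andP[/eqP pba _]].
  move: ax; rewrite tle_eqVpar pab bx orbF => /eqP ax.
  by rewrite -ax pab.
by move: bx; rewrite (tle_trans (tle_par b)) // pba.
Qed.

Lemma connect_par_mem S x m :
  connect (edge_in r par S) x m -> tle par x m -> x != m -> par x \in S.
Proof.
case/connectP=> p pth -> xm nxm; apply: (path_exit_par (tle_refl x) pth).
by apply/negP => mx; rewrite -(tle_anti xm mx) eqxx in nxm.
Qed.

Lemma ornament_of_par_closed (S : {set V}) v :
  v \in S -> {in S, forall x, tle par x v} ->
  {in S, forall x, x != v -> par x \in S} -> ornament r par S.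
Proof.
move=> vS Sv Spar.
have to_top x : x \in S -> connect (edge_in r par S) x v.
  move=> xS; move: (findex par x v) (iter_findex (Sv x xS)) => n.
  elim: n x xS => [|n IH] x xS; first by move=> /= ->.
  case: (eqVneq x v) => [-> _ | xv]; first exact: connect0.
  have xr : x != r.
    by apply: contra xv => /eqP xr; move: (Sv x xS); rewrite xr => /tle_root ->.
  rewrite iterSr => /(IH _ (Spar x xS xv)).
  apply: connect_trans; apply: connect1.
  by rewrite /edge_in xS Spar // eqxx xr.
apply/andP; split; first by apply/set0Pn; exists v.
apply/forallP => x; apply/implyP => xS; apply/forallP => y; apply/implyP => yS.
rewrite (connect_trans (to_top x xS)) // (sym_connect_sym (@edge_in_sym S)).
exact: to_top.
Qed.

Lemma Delta_subset (A B : {set V}) u :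
  A \subset B -> Delta par A u \subset Delta par B u.
Proof.
by move=> AB; apply/subsetP => w; rewrite !inE => /andP[/(subsetP AB) -> ->].
Qed.

Definition nested_or_disjoint (A B : {set V}) : bool :=
  [|| A \subset B, B \subset A | [disjoint A & B]].

Lemma nested_or_disjointC A B : nested_or_disjoint A B = nested_or_disjoint B A.
Proof. by rewrite /nested_or_disjoint orbCA disjoint_sym. Qed.

Implicit Types d e f : {ffun V -> {set V}}.

Definition orn_update d v (S : {set V}) : {ffun V -> {set V}} :=
  [ffun w => if w == v then S else d w].

Definition orn_weight d := \sum_w #|d w|.

Lemma orn_le_trans e d f : orn_le d e -> orn_le e f -> orn_le d f.
Proof.
move=> /forallP de /forallP ef; apply/forallP => w.
exact: subset_trans (de w) (ef w).
Qed.

Lemma orn_weight_lt d e : orn_lt d e -> orn_weight d < orn_weight e.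
Proof.
case/andP=> ne /forallP de.
have [w dw] : exists w, d w != e w.
  apply/existsP; apply: contraR ne => /existsPn same.
  by apply/eqP/ffunP => w; apply/eqP; rewrite -[_ == _]negbK same.
rewrite /orn_weight (bigD1 w) //= [X in _ < X](bigD1 w) //= -addSn.
apply: leq_add; first by apply: proper_card; rewrite properEneq dw de.
by apply: leq_sum => x _; apply: subset_leq_card.
Qed.

(* A heaviest ornamentation strictly between [d'] (included) and [d] is a
   lower cover of [d]. *)
Lemma exists_cover_above d' d :
  ornamentation r par d' -> ornamentation r par d -> orn_lt d' d ->
  exists2 e, orn_covered r par e d & orn_le d' e.
Proof.
move=> hd' hd lt'.
pose P e := [&& ornamentation r par e, orn_le d' e & orn_lt e d].
have Pd' : P d' by rewrite /P hd' lt' andbT; apply/forallP => w.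
have [e /and3P[he d'e ed] emax] := arg_maxnP orn_weight Pd'.
exists e => //; rewrite /orn_covered he hd ed /=.
apply/existsP => -[f /and3P[hf ef fd]].
have Pf : P f by rewrite /P hf fd (orn_le_trans d'e) //; case/andP: ef.
by move: (orn_weight_lt ef); rewrite ltnNge => /negP; apply; apply: emax.
Qed.

Lemma Pop_subset d v : Pop r par d v \subset d v.
Proof. by rewrite ffunE subsetIl. Qed.

Lemma Pop_subset_cover d e v :
  orn_covered r par e d -> Pop r par d v \subset e v.
Proof.
move=> cov; rewrite ffunE; apply: subset_trans (subsetIr _ _) _.
exact: (@bigcap_inf _ _ e _ (fun d' => d' v) cov).
Qed.

Section Ornamentation.
Variable d : {ffun V -> {set V}}.
Hypothesis hd : ornamentation r par d.

Lemma orn_ornament v : ornament r par (d v).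
Proof. by case/andP: hd => /andP[/forallP]. Qed.

Lemma orn_mem v : v \in d v.
Proof. by case/andP: hd => /andP[_ /forallP/(_ v)/andP[]]. Qed.

Lemma orn_tle v y : y \in d v -> tle par y v.
Proof.
by case/andP: hd => /andP[_ /forallP/(_ v)/andP[_ /forallP/(_ y)/implyP]].
Qed.

Lemma orn_nested v w : nested_or_disjoint (d v) (d w).
Proof. by case/andP: hd => _ /forallP/(_ v)/forallP/(_ w). Qed.

Lemma orn_par_mem v x : x \in d v -> x != v -> par x \in d v.
Proof.
move=> xd; apply: connect_par_mem (orn_tle xd).
have /andP[_ /forallP/(_ x)/implyP/(_ xd)/forallP/(_ v)/implyP] :=
  orn_ornament v.
by apply; apply: orn_mem.
Qed.

Lemma ornamentation_update v (S : {set V}) :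
  ornament r par S -> v \in S -> {in S, forall x, tle par x v} ->
  (forall w, w != v -> nested_or_disjoint S (d w)) ->
  ornamentation r par (orn_update d v S).
Proof.
move=> Sorn vS Sv Snest.
apply/andP; split; first (apply/andP; split);
  apply/forallP => w; rewrite ?ffunE.
- by case: eqP => _ //; apply: orn_ornament.
- case: eqP => [-> | _].
    by rewrite vS; apply/forallP => y; apply/implyP/Sv.
  by rewrite orn_mem; apply/forallP => y; apply/implyP/orn_tle.
- apply/forallP => w'; rewrite ffunE.
  case: (eqVneq w v) => [_ | wv]; case: (eqVneq w' v) => [_ | w'v].
  + by rewrite /nested_or_disjoint subxx.
  + exact: Snest.
  + by rewrite -/(nested_or_disjoint _ _) nested_or_disjointC Snest.
  + exact: orn_nested.
Qed.

Section Prune.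
Variables u v : V.
Hypothesis uv : is_child r par u v.

Local Notation pruned := (d v :\: Delta par (d v) u).

Definition prune := orn_update d v pruned.

Lemma prune_top : v \in pruned.
Proof. by rewrite !inE orn_mem (child_not_ge uv). Qed.

Lemma prune_tle : {in pruned, forall x, tle par x v}.
Proof. by move=> x; rewrite inE => /andP[_]; apply: orn_tle. Qed.

Lemma prune_ornament : ornament r par pruned.
Proof.
apply: (ornament_of_par_closed prune_top prune_tle) => x.
rewrite !inE => /andP[xu xd] xv; rewrite orn_par_mem // andbT /=.
by apply: contra xu => pxu; rewrite xd (tle_trans (tle_par x)).
Qed.

(* A block [d w] inside [d v] either hangs below [u], or avoids the subtree
   of [u] altogether since [u] has no ancestor strictly between it and [v]. *)
Lemma prune_nested w : w != v -> nested_or_disjoint pruned (d w).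
Proof.
rewrite /nested_or_disjoint => wv.
case/or3P: (orn_nested v w) => [vw | wv' | dis].
- by rewrite (subset_trans (subsetDl _ _) vw).
- case: (boolP (tle par w u)) => [wu | wNu].
    apply/or3P/Or33; rewrite disjoint_sym disjoints_subset.
    apply/subsetP => y yw.
    by rewrite !inE (subsetP wv' y yw) (tle_trans (orn_tle yw) wu).
  apply/or3P/Or32/subsetP => y yw; rewrite !inE (subsetP wv' y yw) andbT /=.
  apply/negP => yu; case/orP: (tle_comparable (orn_tle yw) yu) => [wu | uw].
    by rewrite wu in wNu.
  have uNw : u != w by apply: contraNneq wNu => <-; apply: tle_refl.
  have vw : tle par v w.
    by case/andP: uv => /eqP <- _; move: uw; rewrite tle_eqVpar (negbTE uNw).
  have wv'' := tle_anti (orn_tle (subsetP wv' w (orn_mem w))) vw.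
  by rewrite wv'' eqxx in wv.
- by rewrite (disjointWl (subsetDl _ _) dis) !orbT.
Qed.

Lemma ornamentation_prune : ornamentation r par prune.
Proof.
exact: ornamentation_update prune_ornament prune_top prune_tle prune_nested.
Qed.

Lemma prune_lt : u \in d v -> orn_lt prune d.
Proof.
move=> ud; apply/andP; split.
  apply/negP => /eqP/ffunP/(_ v)/setP/(_ u).
  by rewrite ffunE eqxx !inE ud tle_refl.
apply/forallP => w; rewrite ffunE.
by case: eqP => [-> | _]; [apply: subsetDl | apply: subxx].
Qed.

(* Between [prune] and [d] only the block at [v] can change, and it must. *)
Lemma cover_above_prune_drops e :
  orn_covered r par e d -> orn_le prune e ->
  exists2 x, x \in Delta par (d v) u & x \notin e v.
Proof.
case/and4P=> _ _ /andP[ed /forallP/(_ _) e_le_d] _ /forallP/(_ _) prune_le_e.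
apply/subsetPn; apply: contra ed => below_e; apply/eqP/ffunP => w.
apply/eqP; rewrite eqEsubset e_le_d /=.
have := prune_le_e w; rewrite ffunE; case: eqP => [-> pruned_e | //].
apply/subsetP => x xd; case: (boolP (x \in Delta par (d v) u)) => [|xNu].
  exact: (subsetP below_e).
by apply: (subsetP pruned_e); rewrite inE xNu.
Qed.

End Prune.
End Ornamentation.
End OrnamentationLattice.

Theorem lemma2p6 (V : finType) (r : V) (par : V -> V)
  (hT : is_rooted_tree r par) (d : {ffun V -> {set V}})
  (hd : ornamentation r par d) :
  forall v : V,
    Pop r par d v \subset d v /\
    (forall u : V, is_child r par u v -> u \in d v ->
       #|Delta par (Pop r par d v) u| <= #|Delta par (d v) u| - 1).
Proof.
move=> v; split=> [|u uv ud]; first exact: Pop_subset.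
have [e cov prune_e] :=
  exists_cover_above (ornamentation_prune hT hd uv) hd (prune_lt par ud).
have [x xu xe] := cover_above_prune_drops cov prune_e.
have Pop_drops : Delta par (Pop r par d v) u \proper Delta par (d v) u.
  apply/properP; split; first exact/Delta_subset/Pop_subset.
  exists x => //; rewrite inE negb_and.
  by rewrite (contra (subsetP (Pop_subset_cover v cov) x)).
by have := leq_sub2r 1 (proper_card Pop_drops); rewrite subSS subn0.
Qed.
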